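(* Fix $1<s<3/2$ and $z\in\mathbb{D}$, and for $N\ge1$ let \[ J_{N,1}=\int_{\mathcal{U}_N(z)}T_z(x_1)^{4s}K(x_1,x_1)^3\,\mathrm{d}\mu(x_1). \] There exists $c_1(s)>0$ such that for all large enough $N$, \[ |J_{N,1}|\le c_1(s)\frac{(1+|z|)^4}{(1-|z|)^4}e^{(3-2s)N}. \]
   Context: $\mathbb{D}$ is the open unit disk, $\mathrm{d}\mu=\frac{1}{\pi}\mathrm{d}x\,\mathrm{d}y$, $K(z,w)=(1-z\overline{w})^{-2}$. $\varphi_z(x)=\frac{z-x}{1-\overline{z}x}$, $d_{\mathrm{h}}(z,x)=\log\frac{1+|\varphi_z(x)|}{1-|\varphi_z(x)|}$, $T_z(x)=e^{-d_{\mathrm{h}}(z,x)}=\frac{1-|\varphi_z(x)|}{1+|\varphi_z(x)|}$, and $\mathcal{U}_N(z)=\{x\in\mathbb{D}:d_{\mathrm{h}}(z,x)<N\}$. *)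

(* The complex plane is modelled as R * R
   (x = (Re x, Im x)), with the Lebesgue measure on R^2 given by the
   product measure lebesgue_measure \x lebesgue_measure. *)
From HB Require Import structures.
From mathcomp Require Import all_boot all_order all_algebra.
From mathcomp Require Import all_classical all_reals all_analysis.
Set Implicit Arguments. Unset Strict Implicit. Unset Printing Implicit Defensive.
Import Order.TTheory GRing.Theory Num.Theory.
Local Open Scope classical_set_scope.
Local Open Scope ring_scope.

Section Disk.
Variable R : realType.
Definition cpx := (R * R)%type.

Definition csub (u v : cpx) : cpx := (u.1 - v.1, u.2 - v.2).
Definition cmul (u v : cpx) : cpx := (u.1 * v.1 - u.2 * v.2, u.1 * v.2 + u.2 * v.1).
Definition cconj (u : cpx) : cpx := (u.1, - u.2).
Definition cone : cpx := (1, 0).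
Definition cabs (u : cpx) : R := Num.sqrt (u.1 ^+ 2 + u.2 ^+ 2).
Definition cinv (u : cpx) : cpx :=
  (u.1 / (u.1 ^+ 2 + u.2 ^+ 2), - u.2 / (u.1 ^+ 2 + u.2 ^+ 2)).
Definition cdiv (u v : cpx) : cpx := cmul u (cinv v).

Definition disk : set cpx := [set x | cabs x < 1].

Definition phi (z x : cpx) : cpx := cdiv (csub z x) (csub cone (cmul (cconj z) x)).

Definition dh (z x : cpx) : R := ln ((1 + cabs (phi z x)) / (1 - cabs (phi z x))).

Definition Tz (z x : cpx) : R := (1 - cabs (phi z x)) / (1 + cabs (phi z x)).

Definition Kb (z w : cpx) : cpx :=
  let u := cinv (csub cone (cmul z (cconj w))) in cmul u u.

Definition UN (N : R) (z : cpx) : set cpx := [set x | disk x /\ dh z x < N].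

Definition leb2 := ((@lebesgue_measure R) \x (@lebesgue_measure R))%E.

(* J_{N,1} = int_{U_N(z)} T_z(x)^{4s} K(x,x)^3 dmu(x).  K(x,x) is real
   (= (1-|x|^2)^{-2}); we use its real part. The integrand is >= 0, so the
   integral is taken in the extended reals. *)
Definition JN1 (s N : R) (z : cpx) : \bar R :=
  ((pi^-1)%:E * \int[leb2]_(x in UN N z) ((Tz z x) `^ (4 * s) * ((Kb x x).1) ^+ 3)%:E)%E.

End Disk.

From HB Require Import structures.
From mathcomp Require Import all_boot all_order all_algebra.
From mathcomp Require Import all_classical all_reals all_analysis.
From mathcomp Require Import ring lra.
From mathcomp Require Import measurable_realfun.
Set Implicit Arguments. Unset Strict Implicit. Unset Printing Implicit Defensive.
Import Order.TTheory GRing.Theory Num.Theory.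
Local Open Scope ring_scope.
Local Open Scope classical_set_scope.

(* Write C = (1 + |z|) / (1 - |z|) and w(x) = 1 - |x|^2.  The identity
   1 - |phi_z x|^2 = (1 - |z|^2) w(x) / |1 - conj z x|^2 gives T_z(x) <= C w(x),
   while x in U_N(z) means T_z(x) > e^-N, hence w(x) > e^-N / C.  As K(x,x)^3 = w^-6,
   for 0 <= q <= 6 - 4s the integrand is at most C^(4s) (C e^N)^(6-4s-q) w^-q on
   U_N(z), and for q < 1 the integral of w^-q over {w > e^-N / C} is bounded
   independently of N: integrate first along vertical chords (Fubini), bounding
   (t^2 - y^2)^-q by t^-q ((t - y)^-q + (t + y)^-q), which has an explicit primitive.
   With q = s(3 - 2s) the exponent 6 - 4s - q = (2 - s)(3 - 2s) falls short of
   3 - 2s by (s - 1)(3 - 2s) > 0, and this margin absorbs every constant depending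
   on z once N is large. *)

(* The nonnegative integral is a supremum over simple minorants, so no
   measurability is needed here, unlike in [ge0_le_integral]. *)
Lemma ge0_le_integralT d (T : measurableType d) (R : realType)
    (mu : {measure set T -> \bar R}) (f g : T -> \bar R) :
  (forall x, 0 <= f x)%E -> (forall x, f x <= g x)%E ->
  (\int[mu]_x f x <= \int[mu]_x g x)%E.
Proof.
move=> f0 fg.
have g0 x : (0 <= g x)%E by exact: le_trans (f0 x) (fg x).
rewrite (ge0_integralTE mu f0) (ge0_integralTE mu g0).
apply: ereal_sup_le => _ [h hf <-]; exists h => //= x.
exact: le_trans (hf x) (fg x).
Qed.

Section powR_bounds.
Variable R : realType.
Implicit Types (p q t u v X : R).

Lemma ler_powRN u v q : 0 < u -> u <= v -> 0 <= q -> v `^ (- q) <= u `^ (- q).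
Proof.
move=> u0 uv q0; rewrite !powRN lef_pV2 ?posrE ?powR_gt0 //; last exact: lt_le_trans uv.
by apply: ge0_ler_powR => //; rewrite nnegrE ltW // (lt_le_trans u0).
Qed.

Lemma powRN_le_mul u X p q : 0 < u -> 1 <= X * u -> q <= p ->
  u `^ (- p) <= X `^ (p - q) * u `^ (- q).
Proof.
move=> u0 Xu qp.
have X0 : 0 < X by rewrite -(pmulr_lgt0 _ u0) (lt_le_trans ltr01).
rewrite (_ : - p = - (p - q) + - q); last by ring.
rewrite (powRD (x := u)) ?(gt_eqF u0) ?implybT // ler_pM2r ?powR_gt0 //.
rewrite powRN -div1r ler_pdivrMr ?powR_gt0 // -powRM ?(ltW X0) ?(ltW u0) //.
by rewrite -(powRr0 (X * u)) ler_powR // subr_ge0.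
Qed.

Lemma powRN_chord_le t q : 0 < t -> t <= 1 -> 0 <= q -> q < 1 ->
  t `^ (- q) * (2 * (2 * t) `^ (1 - q) / (1 - q)) <= 4 / (1 - q) * t^-1.
Proof.
move=> t0 t1 q0 q1.
have tt : t `^ (- q) * t `^ (1 - q) <= t^-1.
  rewrite -powRD; last by rewrite (gt_eqF t0) implybT.
  rewrite (_ : t^-1 = t `^ (-1)); last by rewrite powR_inv1 // ltW.
  by apply: ger_powR; [rewrite t0 | lra].
have two : 2 `^ (1 - q) <= 2 :> R.
  by rewrite -[leRHS]powRr1 // ler_powR //; lra.
have q1' : 0 < (1 - q)^-1 by rewrite invr_gt0 subr_gt0.
have -> : 4 = 2 * 2 :> R by rewrite -natrM.
rewrite powRM ?(ltW t0) // (_ : _ * (2 * _ / _) =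
  2 * 2 `^ (1 - q) / (1 - q) * (t `^ (- q) * t `^ (1 - q))); last by ring.
apply: ler_pM => //; first by rewrite !mulr_ge0 ?powR_ge0 // ltW.
  by rewrite mulr_ge0 ?powR_ge0.
by rewrite ler_wpM2r ?(ltW q1') // ler_wpM2l.
Qed.

End powR_bounds.

Section chord_integral.
Variable R : realType.
Implicit Types (A b c dl k q r t u y : R).

Definition sym_powN c r y := (c - y) `^ (- r) + (c + y) `^ (- r).

Definition sym_powN_prim c r y :=
  ((c + y) `^ (1 - r) - (c - y) `^ (1 - r)) / (1 - r).

Lemma sym_powN_ge0 c r y : 0 <= sym_powN c r y.
Proof. by rewrite addr_ge0 ?powR_ge0. Qed.

Lemma is_derive_powR_addl (a : R) c y : 0 < c + y ->
  is_derive y 1 (fun t => (c + t) `^ a) (a * (c + y) `^ (a - 1)).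
Proof.
move=> cy0; have dcy : is_derive y 1 (fun t : R => c + t) 1.
  by have := is_deriveD (is_derive_cst c y 1) (is_derive_id y 1); rewrite add0r.
have := is_derive1_comp (f := fun u => u `^ a) (g := fun t => c + t)
  (is_derive1_powR a cy0) dcy.
by rewrite mulr1.
Qed.

Lemma is_derive_powR_subl (a : R) c y : 0 < c - y ->
  is_derive y 1 (fun t => (c - t) `^ a) (- (a * (c - y) `^ (a - 1))).
Proof.
move=> cy0; have dcy : is_derive y 1 (fun t : R => c - t) (-1).
  by have := is_deriveB (is_derive_cst c y 1) (is_derive_id y 1); rewrite sub0r.
have := is_derive1_comp (f := fun u => u `^ a) (g := fun t => c - t)
  (is_derive1_powR a cy0) dcy.
by rewrite mulrN1.
Qed.

Lemma is_derive_sym_powN_prim c r y : r != 1 -> -c < y < c ->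
  is_derive y 1 (sym_powN_prim c r) (sym_powN c r y).
Proof.
move=> r1 /andP[cy1 cy2].
have cy0 : 0 < c - y by lra.
have cy0' : 0 < c + y by lra.
have r1' : 1 - r != 0 by rewrite subr_eq0 eq_sym.
have -> : sym_powN_prim c r =
    (1 - r)^-1 *: (fun t => (c + t) `^ (1 - r) - (c - t) `^ (1 - r)).
  by apply/funext => t; rewrite /sym_powN_prim /= mulrC.
have -> : sym_powN c r y = (1 - r)^-1 *:
    ((1 - r) * (c + y) `^ (1 - r - 1) - - ((1 - r) * (c - y) `^ (1 - r - 1))).
  rewrite opprK /GRing.scale /= mulrDr !mulrA mulVf // !mul1r addrAC subrr add0r.
  by rewrite addrC.
exact/is_deriveZ/is_deriveB/is_derive_powR_subl/cy0/is_derive_powR_addl.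
Qed.

Lemma derivable_sym_powN c r y : -c < y < c -> derivable (sym_powN c r) y 1.
Proof.
move=> /andP[cy1 cy2].
have cy0 : 0 < c - y by lra.
have cy0' : 0 < c + y by lra.
by case: (is_deriveD (is_derive_powR_subl (- r) cy0) (is_derive_powR_addl (- r) cy0')).
Qed.

Lemma integral_sym_powN_le k c b r : 0 <= k -> 0 < b -> b < c -> r < 1 ->
  (\int[lebesgue_measure]_(y in `](- b)%R, b[) (k * sym_powN c r y)%:E <=
   (k * (2 * (2 * c) `^ (1 - r) / (1 - r)))%:E)%E.
Proof.
move=> k0 b0 bc r1.
have inI y : y \in `[(- b), b]%R -> -c < y < c.
  by rewrite in_itv /= => /andP[? ?]; apply/andP; split; lra.
have nb : - b < b by lra.
pose F := k \*: sym_powN_prim c r.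
have dF y : y \in `[(- b), b]%R -> is_derive y 1 F (k * sym_powN c r y).
  by move/inI=> hy; apply/is_deriveZ/is_derive_sym_powN_prim => //; rewrite lt_eqF.
have cf : {within `[(- b), b], continuous (k \*: sym_powN c r)}.
  apply: derivable_within_continuous => y /inI hy.
  exact/derivableZ/derivable_sym_powN.
have cF : {within `[(- b), b], continuous F}.
  by apply: derivable_within_continuous => y /dF [].
apply: (@le_trans _ _
  (\int[lebesgue_measure]_(y in `[(- b)%R, b]) (k * sym_powN c r y)%:E)%E).
  rewrite [leLHS]integral_mkcond [leRHS]integral_mkcond.
  apply: ge0_le_integralT => y; rewrite !patchE.
    by case: ifP => // _; rewrite lee_fin mulr_ge0 ?sym_powN_ge0.
  case: ifPn => [|_]; last first.
    by case: ifP => // _; rewrite lee_fin mulr_ge0 ?sym_powN_ge0.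
  by rewrite !inE /= !in_itv /= => /andP[? ?]; rewrite ifT // inE /= in_itv /= !ltW.
rewrite (continuous_FTC2 nb cf (F := F)); last 2 first.
- have [_ FbL FbR] := (continuous_within_itvP _ nb).1 cF.
  split => // y; rewrite in_itv /= => /andP[? ?].
  by have /dF[] : y \in `[(- b), b]%R by rewrite in_itv /= !ltW.
- move=> y; rewrite in_itv /= => /andP[? ?].
  rewrite derive1E.
  by have /dF[_ ->] : y \in `[(- b), b]%R by rewrite in_itv /= !ltW.
rewrite -EFinD lee_fin /F /= /sym_powN_prim opprK -mulrBr.
apply: ler_wpM2l => //; rewrite -mulrBl.
have r1' : 0 < 1 - r by rewrite subr_gt0.
apply: ler_wpM2r; first by rewrite invr_ge0 ltW.
have : (c + b) `^ (1 - r) <= (2 * c) `^ (1 - r).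
  by apply: ge0_ler_powR; rewrite ?nnegrE; lra.
have := powR_ge0 (c - b) (1 - r); lra.
Qed.

Lemma powR_sqr_subN_le t y q : -t < y < t -> 0 <= q ->
  (t ^+ 2 - y ^+ 2) `^ (- q) <= t `^ (- q) * sym_powN t q y.
Proof.
move=> /andP[ty1 ty2] q0.
have ty0 : 0 < t - y by lra.
have ty0' : 0 < t + y by lra.
have t0 : 0 < t by lra.
rewrite (_ : t ^+ 2 - y ^+ 2 = (t - y) * (t + y)); last by ring.
have [y0|y0] := leP 0 y.
- apply: (@le_trans _ _ (((t - y) * t) `^ (- q))).
    by apply: ler_powRN => //; [exact: mulr_gt0 | apply: ler_wpM2l; lra].
  rewrite powRM ?(ltW ty0) ?(ltW t0) // [leLHS]mulrC ler_pM2l ?powR_gt0 //.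
  by rewrite lerDl powR_ge0.
- apply: (@le_trans _ _ ((t * (t + y)) `^ (- q))).
    by apply: ler_powRN => //; [exact: mulr_gt0 | apply: ler_wpM2r; lra].
  rewrite powRM ?(ltW ty0') ?(ltW t0) // ler_pM2l ?powR_gt0 //.
  by rewrite lerDr powR_ge0.
Qed.

Definition powNcut dl q u := if dl < u then u `^ (- q) else 0.

Lemma powNcut_ge0 dl q u : 0 <= powNcut dl q u.
Proof. by rewrite /powNcut; case: ifP => // _; exact: powR_ge0. Qed.

Lemma powNcut_le dl q u : u <= dl -> powNcut dl q u = 0.
Proof. by rewrite /powNcut ltNge => ->. Qed.

(* The bound has the same shape as the integrand, so that the lemma applies again
   to the outer integral of a double integral. *)
Lemma integral_powNcut_sqr_le k dl A q : 0 <= k -> 0 < dl -> A <= 1 ->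
  0 <= q -> q < 1 ->
  (\int[lebesgue_measure]_y (k * powNcut dl q (A - y ^+ 2))%:E <=
   (k * (4 / (1 - q)) * powNcut dl (2^-1) A)%:E)%E.
Proof.
move=> k0 dl0 A1 q0 q1.
have [dlA|Adl] := ltP dl A; last first.
  rewrite integral0_eq => [|y _]; first by rewrite powNcut_le // mulr0.
  by rewrite powNcut_le ?mulr0 // lerBlDr (le_trans Adl) // lerDl sqr_ge0.
have A0 : 0 < A by exact: lt_trans dlA.
set t := Num.sqrt A; set b := Num.sqrt (A - dl).
have t0 : 0 < t by rewrite sqrtr_gt0.
have b0 : 0 < b by rewrite sqrtr_gt0 subr_gt0.
have bt : b < t by rewrite ltr_sqrt ?subr_gt0 // ltrBlDr ltrDl.
have t1 : t <= 1 by rewrite -sqrtr1 ler_sqrt.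
have tA : t ^+ 2 = A by rewrite sqr_sqrtr // ltW.
have -> : powNcut dl (2^-1) A = t^-1.
  by rewrite /powNcut dlA powRN powR12_sqrt // ltW.
apply: (@le_trans _ _ (\int[lebesgue_measure]_(y in `](- b)%R, b[)
    (k * t `^ (- q) * sym_powN t q y)%:E)%E).
  rewrite [leRHS]integral_mkcond; apply: ge0_le_integralT => y.
    by rewrite lee_fin mulr_ge0 ?powNcut_ge0.
  rewrite patchE /powNcut; case: ifPn => [hy|_]; last first.
    rewrite mulr0; case: ifP => // _.
    by rewrite lee_fin !mulr_ge0 ?powR_ge0 ?sym_powN_ge0.
  have : `|y| < b by rewrite -sqrtr_sqr ltr_sqrt ?exprn_gt0 ?normr_gt0 //; lra.
  rewrite ltr_norml => /andP[yb1 yb2].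
  rewrite ifT ?inE /= ?in_itv /= ?yb1 ?yb2 // lee_fin -mulrA ler_wpM2l // -tA.
  by apply: powR_sqr_subN_le => //; apply/andP; split; lra.
have ktq : 0 <= k * t `^ (- q) by rewrite mulr_ge0 ?powR_ge0.
apply: le_trans (integral_sym_powN_le ktq b0 bt q1) _.
by rewrite lee_fin -mulrA -[_ / t]mulrA ler_wpM2l // powRN_chord_le.
Qed.

End chord_integral.

Section disk_integral.
Variable R : realType.
Implicit Types (dl k q : R) (x : cpx R).

Definition gap x := 1 - x.1 ^+ 2 - x.2 ^+ 2.

Lemma measurable_gap : measurable_fun setT gap.
Proof.
apply: measurable_funB; last exact: measurable_funX measurable_snd.
exact: measurable_funB (measurable_cst _) (measurable_funX _ measurable_fst).
Qed.

Lemma measurable_powNcut dl q : measurable_fun setT (powNcut dl q).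
Proof.
rewrite (_ : powNcut dl q = fun u => if dl < u then u `^ (- q) else 0) //.
apply: measurable_fun_ifT; last exact: measurable_cst.
  exact: (measurable_fun_ltr (measurable_cst dl) (@measurable_id _ _ setT)).
exact: measurable_powR.
Qed.

Lemma integral_powNcut_gap_le k dl q : 0 <= k -> 0 < dl -> 0 <= q -> q < 1 ->
  (\int[@leb2 R]_x (k * powNcut dl q (gap x))%:E <= (k * (32 / (1 - q)))%:E)%E.
Proof.
move=> k0 dl0 q0 q1.
have f0 x : (0 <= (k * powNcut dl q (gap x))%:E)%E.
  by rewrite lee_fin mulr_ge0 ?powNcut_ge0.
have mf : measurable_fun setT (fun x => (k * powNcut dl q (gap x))%:E).
  apply/measurable_EFinP/measurable_funM; first exact: measurable_cst.
  exact: measurableT_comp (measurable_powNcut dl q) measurable_gap.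
rewrite (@fubini_tonelli1 _ _ _ _ _ (@lebesgue_measure R) (@lebesgue_measure R) _ mf f0).
rewrite /fubini_F /gap /=.
have k4 : 0 <= k * (4 / (1 - q)) by rewrite mulr_ge0 ?divr_ge0 // subr_ge0 ltW.
apply: (@le_trans _ _ (\int[lebesgue_measure]_x
    (k * (4 / (1 - q)) * powNcut dl (2^-1) (1 - x ^+ 2))%:E)%E).
  apply: ge0_le_integralT => x1; first by apply: integral_ge0 => y _; exact: f0 (x1, y).
  by apply: integral_powNcut_sqr_le => //; rewrite lerBlDr lerDl sqr_ge0.
apply: le_trans (integral_powNcut_sqr_le (q := 2^-1) k4 dl0 (lexx 1) _ _) _.
- by rewrite invr_ge0.
- by rewrite invf_lt1 // ltr1n.
have cut1 : powNcut dl (2^-1) 1 <= 1 by rewrite /powNcut powR1; case: ifP.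
rewrite lee_fin (_ : k * (32 / (1 - q)) = k * (4 / (1 - q)) * 8 * 1); last by ring.
rewrite (_ : 4 / (1 - 2^-1) = 8 :> R); last by field.
by rewrite ler_wpM2l // mulr_ge0.
Qed.

End disk_integral.

Section disk_geometry.
Variable R : realType.
Implicit Types (z x u : cpx R) (N : R).

Lemma sqr_cabs u : cabs u ^+ 2 = u.1 ^+ 2 + u.2 ^+ 2.
Proof. by rewrite sqr_sqrtr // addr_ge0 ?sqr_ge0. Qed.

Lemma gapE x : gap x = 1 - cabs x ^+ 2.
Proof. by rewrite sqr_cabs /gap opprD addrA. Qed.

Lemma Kb_diag x : (Kb x x).1 = (gap x)^-1 ^+ 2.
Proof.
case: x => x1 x2; rewrite /Kb /cmul /cinv /csub /cconj /cone /gap /=.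
have -> : 0 - (x1 * - x2 + x2 * x1) = 0 by ring.
have -> : 1 - (x1 * x1 - x2 * - x2) = 1 - x1 ^+ 2 - x2 ^+ 2 by ring.
set W := 1 - x1 ^+ 2 - x2 ^+ 2.
rewrite oppr0 mul0r mulr0 subr0 expr0n /= addr0.
have [->|W0] := eqVneq W 0; first by rewrite !mul0r invr0 expr0n.
by field.
Qed.

Lemma one_sub_cabs_le_conj_mul z x : cabs z < 1 -> cabs x < 1 ->
  (1 - cabs z) ^+ 2 <= cabs (csub (cone R) (cmul (cconj z) x)) ^+ 2.
Proof.
move=> z1 x1; rewrite sqr_cabs.
have a0 : 0 <= cabs z := sqrtr_ge0 _.
have b0 : 0 <= cabs x := sqrtr_ge0 _.
case: z x z1 x1 a0 b0 => [z1 z2] [x1 x2] /=.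
set p := z1 * x1 + z2 * x2; set r := z1 * x2 - z2 * x1.
have lagrange : p ^+ 2 + r ^+ 2 = cabs (z1, z2) ^+ 2 * cabs (x1, x2) ^+ 2.
  by rewrite !sqr_cabs /p /r /=; ring.
move: lagrange; set a := cabs _; set b := cabs _ => lagrange za xb a0 b0.
have pab : p <= a * b.
  have : p ^+ 2 <= (a * b) ^+ 2 by rewrite exprMn -lagrange lerDl sqr_ge0.
  by have := mulr_ge0 a0 b0; nra.
have -> : z1 * x1 - - z2 * x2 = p by rewrite /p; ring.
have -> : z1 * x2 + - z2 * x1 = r by rewrite /r; ring.
have -> : (1 - p) ^+ 2 + (0 - r) ^+ 2 = 1 - 2 * p + (a * b) ^+ 2.
  by rewrite exprMn -lagrange; ring.
have : 1 - a <= 1 - a * b by nra.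
nra.
Qed.

Lemma one_sub_sqr_cabs_phi z x : cabs z < 1 -> cabs x < 1 ->
  1 - cabs (phi z x) ^+ 2 = (1 - cabs z ^+ 2) * (1 - cabs x ^+ 2) /
    cabs (csub (cone R) (cmul (cconj z) x)) ^+ 2.
Proof.
move=> hz hx; have := one_sub_cabs_le_conj_mul hz hx.
have : 0 < (1 - cabs z) ^+ 2 by rewrite exprn_gt0 // subr_gt0.
move=> /lt_le_trans /[apply]; rewrite !sqr_cabs; clear hz hx.
case: z x => [z1 z2] [x1 x2].
rewrite /phi /cdiv /cmul /cinv /csub /cconj /cone /= => S0.
by rewrite sub0r in S0; field; rewrite gt_eqF.
Qed.

Definition distortion z := (1 + cabs z) / (1 - cabs z).

Lemma distortion_gt0 z : cabs z < 1 -> 0 < distortion z.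
Proof. by move=> hz; rewrite divr_gt0 ?subr_gt0 // ltr_pwDl // sqrtr_ge0. Qed.

Lemma phi_bounds z x : cabs z < 1 -> cabs x < 1 ->
  cabs (phi z x) < 1 /\ 1 - cabs (phi z x) <= distortion z * gap x.
Proof.
move=> hz hx; have S1 := one_sub_cabs_le_conj_mul hz hx.
have := one_sub_sqr_cabs_phi hz hx; rewrite gapE.
move: S1; set S := cabs _ ^+ 2; set rho := cabs (phi z x).
have r0 : 0 <= rho := sqrtr_ge0 _.
have a0 : 0 <= cabs z := sqrtr_ge0 _.
have b0 : 0 <= cabs x := sqrtr_ge0 _.
have a1 : 0 < 1 - cabs z by rewrite subr_gt0.
have a2 : 0 < 1 - cabs z ^+ 2 by rewrite subr_gt0 expr_lt1.
have b2 : 0 < 1 - cabs x ^+ 2 by rewrite subr_gt0 expr_lt1.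
move=> S1 rhoE.
have S0 : 0 < S by apply: lt_le_trans S1; rewrite exprn_gt0.
have : 0 < 1 - rho ^+ 2 by rewrite rhoE !mulr_gt0 ?invr_gt0.
move=> r2; have r1 : rho < 1 by nra.
split => //; apply: (@le_trans _ _ (1 - rho ^+ 2)); first by nra.
rewrite rhoE (_ : distortion z = (1 - cabs z ^+ 2) / (1 - cabs z) ^+ 2).
  by rewrite mulrAC ler_pM2r // ler_pM2l // lef_pV2 // posrE // exprn_gt0.
by rewrite /distortion; field; rewrite gt_eqF.
Qed.

Lemma Tz_gt0 z x : cabs z < 1 -> disk x -> 0 < Tz z x.
Proof.
move=> hz hx; have [r1 _] := phi_bounds hz hx.
by rewrite divr_gt0 // ?subr_gt0 // ltr_pwDl // sqrtr_ge0.
Qed.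

Lemma Tz_le z x : cabs z < 1 -> disk x -> Tz z x <= distortion z * gap x.
Proof.
move=> hz hx; have [r1 hle] := phi_bounds hz hx.
apply: le_trans hle; rewrite /Tz ler_pdivrMr; last by rewrite ltr_pwDl // sqrtr_ge0.
by rewrite ler_peMr ?lerDl ?sqrtr_ge0 // subr_ge0 (ltW r1).
Qed.

Lemma expRN_lt_Tz N z x : cabs z < 1 -> UN N z x -> expR (- N) < Tz z x.
Proof.
move=> hz [hx hN]; have T0 := Tz_gt0 hz hx.
move: hN; rewrite /dh -invf_div -/(Tz z x) lnV ?posrE // ltrNl.
by move=> h; rewrite -(lnK (x := Tz z x)) ?posrE // ltr_expR.
Qed.

End disk_geometry.

Section J_bound.
Variable R : realType.
Implicit Types (z x : cpx R) (s q N : R).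

Lemma integrand_le s q N z x : cabs z < 1 -> UN N z x -> 0 <= s -> q <= 6 - 4 * s ->
  Tz z x `^ (4 * s) * (Kb x x).1 ^+ 3 <=
    distortion z `^ (4 * s) * (distortion z * expR N) `^ (6 - 4 * s - q) *
    powNcut (expR (- N) / distortion z) q (gap x).
Proof.
move=> hz hU s0 qs; set C := distortion z.
have T0 := Tz_gt0 hz hU.1; have TC := Tz_le hz hU.1.
have eNT := expRN_lt_Tz hz hU.
have C0 : 0 < C := distortion_gt0 hz.
have g0 : 0 < gap x by rewrite -(pmulr_rgt0 _ C0) (lt_le_trans T0).
have dlg : expR (- N) / C < gap x by rewrite ltr_pdivrMr // mulrC (lt_le_trans eNT).
have -> : (Kb x x).1 ^+ 3 = gap x `^ (- 6).
  by rewrite Kb_diag -exprM exprVn -powR_invn // ltW.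
rewrite /powNcut dlg.
apply: (@le_trans _ _ (C `^ (4 * s) * gap x `^ (4 * s) * gap x `^ (- 6))).
  rewrite ler_pM2r ?powR_gt0 // -powRM ?(ltW C0) ?(ltW g0) //.
  have s4 : 0 <= 4 * s by rewrite mulr_ge0.
  apply: (ge0_ler_powR s4) => //; rewrite nnegrE; first exact: ltW.
  exact: mulr_ge0 (ltW C0) (ltW g0).
rewrite -mulrA -mulrA ler_pM2l ?powR_gt0 // -powRD ?(gt_eqF g0) ?implybT //.
rewrite (_ : 4 * s + - 6%:R = - (6 - 4 * s)); last by ring.
apply: powRN_le_mul => //.
have -> : 1 = C * expR N * (expR (- N) / C).
  by rewrite expRN; field; rewrite !gt_eqF ?expR_gt0.
by rewrite ler_pM2l ?(mulr_gt0 C0 (expR_gt0 N)) // ltW.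
Qed.

Lemma JN1_ge0 s N z : (0 <= JN1 s N z)%E.
Proof.
rewrite mule_ge0 ?lee_fin ?invr_ge0 ?pi_ge0 //.
apply: integral_ge0 => x _.
by rewrite lee_fin mulr_ge0 ?powR_ge0 // Kb_diag exprn_ge0 // sqr_ge0.
Qed.

Lemma JN1_le s q N z : cabs z < 1 -> 0 <= s -> 0 <= q -> q < 1 -> q <= 6 - 4 * s ->
  (JN1 s N z <= (pi^-1 * (32 / (1 - q)) * distortion z `^ (6 - q) *
     expR ((6 - 4 * s - q) * N))%:E)%E.
Proof.
move=> hz s0 q0 q1 qs; have C0 := distortion_gt0 hz; set C := distortion z in C0 *.
set k := C `^ (4 * s) * (C * expR N) `^ (6 - 4 * s - q).
have k0 : 0 <= k by rewrite mulr_ge0 ?powR_ge0.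
have dl0 : 0 < expR (- N) / C by rewrite divr_gt0 ?expR_gt0.
rewrite -mulrA (_ : C `^ (6 - q) * _ = k); last first.
  rewrite /k powRM ?(ltW C0) ?expR_ge0 // -expRM mulrA -powRD ?(gt_eqF C0) ?implybT //.
  by congr (_ `^ _ * expR _); ring.
rewrite mulrAC -mulrA EFinM; apply: lee_wpmul2l; first by rewrite lee_fin invr_ge0 pi_ge0.
rewrite integral_mkcond; apply: le_trans (integral_powNcut_gap_le k0 dl0 q0 q1).
apply: ge0_le_integralT => x; rewrite patchE.
  case: ifP => // _.
  by rewrite lee_fin mulr_ge0 ?powR_ge0 // Kb_diag exprn_ge0 // sqr_ge0.
case: ifPn => [/set_mem hx | _]; last by rewrite lee_fin mulr_ge0 ?powNcut_ge0.
by rewrite lee_fin integrand_le.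
Qed.

End J_bound.

Theorem lemma3p1 (R : realType) (s : R) (hs1 : 1 < s) (hs2 : s < 3 / 2) :
  exists c1 : R, 0 < c1 /\
    forall z : cpx R, cabs z < 1 ->
      exists N0 : R, forall N : R, 1 <= N -> N0 <= N ->
        (`| JN1 s N z | <=
          (c1 * (1 + cabs z) ^+ 4 / (1 - cabs z) ^+ 4 * expR ((3 - 2 * s) * N))%:E)%E.
Proof.
set q := s * (3 - 2 * s); set g := (s - 1) * (3 - 2 * s).
have s0 : 0 <= s by lra.
have q0 : 0 <= q by rewrite mulr_ge0 //; lra.
have q1 : q < 1 by rewrite /q; nra.
have qs : q <= 6 - 4 * s by rewrite /q; nra.
have g0 : 0 < g by rewrite mulr_gt0 //; lra.
set c1 := pi^-1 * (32 / (1 - q)).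
have c0 : 0 < c1 by rewrite mulr_gt0 ?invr_gt0 ?pi_gt0 // divr_gt0 // subr_gt0.
exists c1; split => // z hz.
exists (ln (distortion z `^ (2 - q)) / g) => N _ hN.
rewrite gee0_abs ?JN1_ge0 //; apply: le_trans (JN1_le N hz s0 q0 q1 qs) _.
have C0 := distortion_gt0 hz; set C := distortion z in C0 hN *.
have CN : C `^ (2 - q) <= expR (g * N).
  rewrite -(lnK (x := C `^ (2 - q))) ?posrE ?powR_gt0 //.
  by rewrite ler_expR -ler_pdivrMl // mulrC.
rewrite -(mulrA _ ((1 + cabs z) ^+ 4)) -expr_div_n -/(distortion z) -/C lee_fin.
rewrite (_ : 6 - q = 4%:R + (2 - q)); last by ring.
rewrite powRD ?(gt_eqF C0) ?implybT // powR_mulrn ?(ltW C0) //.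
rewrite (_ : (3 - 2 * s) * N = g * N + (6 - 4 * s - q) * N); last by rewrite /g /q; ring.
rewrite -/c1 expRD [in leLHS]mulrA [in leRHS]mulrA ler_pM2r ?expR_gt0 //.
by rewrite ler_pM2l // mulr_gt0 // exprn_gt0.
Qed.
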